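(* Let $L$ be a sublattice of $A_n$ of rank $n$, let $v\in H_0$, and put $h=h_{\triangle,L}(v)$. Consider the simplex $S(v)=\{u\in H_0: u_j\ge v_j-h\ \forall j\}$ and its facets $F_i=\{u\in S(v): u_i=v_i-h\}$, $i=0,\dots,n$. Then $v\in\mathrm{Crit}(L)$ if and only if for each $i\in\{0,\dots,n\}$ there exists $p_i\in L$ with $p_i\in F_i$ and $p_i\notin F_j$ for all $j\neq i$. In particular, every $v\in\mathrm{Crit}(L)$ lies in the intersection $V_\triangle(p_0)\cap\dots\cap V_\triangle(p_n)$ of $n+1$ Voronoi cells of distinct points $p_0,\dots,p_n\in L$.
   Context: Let $n\ge 1$, $H_0=\{x\in\mathbb R^{n+1}:\sum_i x_i=0\}$ and $A_n=H_0\cap\mathbb Z^{n+1}$. For $p,q\in H_0$ let $d_\triangle(p,q)=\max_i(p_i-q_i)$, and for $x\in H_0$ let $h_{\triangle,L}(x)=\min_{p\in L}d_\triangle(x,p)$. $\mathrm{Crit}(L)$ denotes the set of points of $H_0$ that are local maxima of $h_{\triangle,L}$ on $H_0$. For $p\in L$, the Voronoi cell is $V_\triangle(p)=\{x\in H_0: d_\triangle(x,p)\le d_\triangle(x,p')\ \forall p'\in L\}$. *)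

From Stdlib Require Import Reals ZArith ClassicalEpsilon.
From mathcomp Require Import all_boot.
Set Implicit Arguments.
Unset Strict Implicit.
Unset Printing Implicit Defensive.
Local Open Scope R_scope.

(* A point of R^{n+1}: coordinates indexed by 'I_(n.+1) = {0,...,n}. *)
Definition pt (n : nat) := 'I_n.+1 -> R.

Definition H0 (n : nat) (x : pt n) : Prop :=
  \big[Rplus/R0]_(i < n.+1) x i = R0.

Definition dtri (n : nat) (p q : pt n) : R :=
  \big[Rmax/(p ord0 - q ord0)]_(i < n.+1) (p i - q i).

Definition integral_pt (n : nat) (x : pt n) : Prop :=
  forall i, exists z : Z, x i = IZR z.

Definition sublattice_An (n : nat) (L : pt n -> Prop) : Prop :=
  L (fun _ => R0) /\
  (forall p q, L p -> L q -> L (fun i => (p i - q i))) /\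
  (forall p, L p -> integral_pt p /\ H0 p).

Definition rank_n (n : nat) (L : pt n -> Prop) : Prop :=
  exists b : 'I_n -> pt n,
    (forall k, L (b k)) /\
    (forall c : 'I_n -> R,
        (forall j, \big[Rplus/R0]_(k < n) (c k * b k j) = R0) ->
        forall k, c k = R0).

(* h_{tri,L}(x) = min_{p in L} d_tri(x,p)  (the minimum is attained since L is
   discrete; we pick it with Hilbert's epsilon). *)
Definition is_hmin (n : nat) (L : pt n -> Prop) (x : pt n) (m : R) : Prop :=
  (exists p, L p /\ dtri x p = m) /\ (forall p, L p -> (m <= dtri x p)).

Definition hL (n : nat) (L : pt n -> Prop) (x : pt n) : R :=
  epsilon (inhabits R0) (is_hmin L x).

Definition Crit (n : nat) (L : pt n -> Prop) (v : pt n) : Prop :=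
  H0 v /\
  exists eps : R, (0 < eps) /\
    forall x : pt n, H0 x -> (forall i, (Rabs (x i - v i) < eps)) ->
      (hL L x <= hL L v).

Definition Voronoi (n : nat) (L : pt n -> Prop) (p : pt n) (x : pt n) : Prop :=
  H0 x /\ forall p', L p' -> (dtri x p <= dtri x p').

Definition simplexS (n : nat) (L : pt n -> Prop) (v u : pt n) : Prop :=
  H0 u /\ forall j, (v j - hL L v <= u j).

Definition facetF (n : nat) (L : pt n -> Prop) (v : pt n) (i : 'I_n.+1) (u : pt n) : Prop :=
  simplexS L v u /\ u i = (v i - hL L v).

(** A point p of H_0 lies in S(v) iff d(v, p) <= h, and on F_i iff moreover
    the coordinate i realises d(v, p) = h.  If every facet F_i carries a
    lattice point p_i lying on no other facet, then any small move x of v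
    inside H_0 decreases some coordinate i, and p_i is still at distance at
    most h from x: so h cannot increase near v.
    Conversely, move v to v + d(1,...,1) - E e_i with (n+1) d = E small.  All
    coordinates except the i-th increase, so a lattice point q realising
    h(x) <= h satisfies v_j - q_j < h for j <> i; hence it is the i-th
    coordinate that realises d(v, q) >= h, and since q_i is an integer caught
    in (v_i - h - E, v_i - h], discreteness forces q_i = v_i - h. *)
From HB Require Import structures.
From Stdlib Require Import Reals ZArith ClassicalEpsilon Classical Lra Lia.
From mathcomp Require Import all_boot.
Local Open Scope R_scope.

HB.instance Definition _ :=
  Monoid.isComLaw.Build R R0 Rplus (fun a b c => esym (Rplus_assoc a b c))
    Rplus_comm Rplus_0_l.
HB.instance Definition _ :=
  Monoid.isComLaw.Build Z 0%Z Z.add Z.add_assoc Z.add_comm Z.add_0_l.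

Lemma Int_part_le r : IZR (Int_part r) <= r.
Proof. by have [] := base_Int_part r. Qed.

Lemma Int_part_IZR z : Int_part (IZR z) = z.
Proof. by apply/esym/Int_part_spec; lra. Qed.

Lemma le_Int_part z r : IZR z <= r -> (z <= Int_part r)%Z.
Proof.
move=> zr; have [_ r_lt] := base_Int_part r.
have : IZR z < IZR (Int_part r + 1) by rewrite plus_IZR; lra.
by move/lt_IZR; lia.
Qed.

Lemma Int_part_lt z r : r < IZR z -> (Int_part r < z)%Z.
Proof. by move=> rz; apply: lt_IZR; have := Int_part_le r; lra. Qed.

Lemma Int_part_le_compat r s : r <= s -> (Int_part r <= Int_part s)%Z.
Proof. by move=> rs; apply: le_Int_part; have := Int_part_le r; lra. Qed.

Lemma integers_below_isolated c :
  exists delta, 0 < delta /\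
    forall z, c - delta < IZR z -> IZR z <= c -> IZR z = c.
Proof.
have fl_le := Int_part_le c.
case: (Rle_lt_or_eq_dec _ _ fl_le) => [fl_lt|fl_eq].
  exists (c - IZR (Int_part c)); split => [|z z_gt /le_Int_part/IZR_le]; lra.
exists 1; split => [|z z_gt z_le]; first lra.
have /le_Int_part z_fl := z_le.
have : IZR (Int_part c - 1) < IZR z by rewrite minus_IZR; lra.
by move/lt_IZR => fl_z; have -> : z = Int_part c by lia.
Qed.

Lemma finite_pos_lower_bound {T : finType} (F : T -> R) :
  (forall t, 0 < F t) -> exists e, 0 < e /\ forall t, e <= F t.
Proof.
move=> F_pos.
suff [e [e_pos e_le]] : exists e, 0 < e /\ forall t, t \in enum T -> e <= F t.
  by exists e; split=> // t; apply: e_le; rewrite mem_enum.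
elim: (enum T) => [|a s [e [e_pos e_le]]]; first by exists 1; split=> //; lra.
exists (Rmin e (F a)); split=> [|t]; first exact: Rmin_glb_lt.
rewrite inE => /orP [/eqP ->|/e_le]; first exact: Rmin_r.
by apply: Rle_trans; apply: Rmin_l.
Qed.

Section Coordinates.
Context {n : nat}.
Implicit Types x y p : pt n.

Lemma dtri_ge x p k : x k - p k <= dtri x p.
Proof.
rewrite /dtri; have : k \in index_enum 'I_n.+1 by rewrite mem_index_enum.
elim: (index_enum _) => [//|a s IH]; rewrite big_cons inE => /orP [/eqP ->|/IH].
  exact: Rmax_l.
by move/Rle_trans; apply; apply: Rmax_r.
Qed.

Lemma dtri_le x p t : (forall k, x k - p k <= t) -> dtri x p <= t.
Proof.
move=> le_t; rewrite /dtri.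
by apply: (big_ind (fun r => r <= t)) => // *; apply: Rmax_lub.
Qed.

Lemma dtri_attained x p : exists k, dtri x p = x k - p k.
Proof.
rewrite /dtri; apply: (big_ind (fun r => exists k, r = x k - p k)).
  by exists ord0.
  move=> a b [k1 ->] [k2 ->]; rewrite /Rmax.
  by case: Rle_dec => _; [exists k2 | exists k1].
by move=> i _; exists i.
Qed.

Lemma H0_exists_le {x y} : H0 x -> H0 y -> exists i, x i <= y i.
Proof.
move=> Hx Hy; apply: NNPP => no_le.
have lt_yx i : y i < x i by apply: Rnot_le_lt => le_xy; apply: no_le; exists i.
suff : \big[Rplus/R0]_(i < n.+1) y i < \big[Rplus/R0]_(i < n.+1) x i.
  by rewrite Hx Hy; lra.
rewrite big_ord_recr [X in _ < X]big_ord_recr /=.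
apply: Rplus_le_lt_compat (lt_yx _).
apply: (big_ind2 Rle) => [|*|i _]; [lra | exact: Rplus_le_compat | ].
exact: Rlt_le.
Qed.

Lemma dtri_ge0 {x p} : H0 x -> H0 p -> 0 <= dtri x p.
Proof.
by move=> Hx Hp; have [k pk_le] := H0_exists_le Hp Hx; have := dtri_ge x p k; lra.
Qed.

Lemma sum_const_R c : \big[Rplus/R0]_(i < n.+1) c = INR n.+1 * c.
Proof.
rewrite big_const_ord; elim: n.+1 => [/=|m IH]; first lra.
by rewrite S_INR /= IH; lra.
Qed.

Lemma sum_delta_R (i : 'I_n.+1) c :
  \big[Rplus/R0]_(j < n.+1) (if j == i then c else 0) = c.
Proof. by rewrite (bigD1 i) //= eqxx big1 ?Rplus_0_r // => j /negbTE ->. Qed.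

Lemma H0_perturb {x} (i : 'I_n.+1) {d E} :
  H0 x -> INR n.+1 * d = E ->
  H0 (fun j => x j + d + (if j == i then - E else 0)).
Proof.
by move=> Hx dE; rewrite /H0 !big_split /= Hx sum_const_R sum_delta_R dE; lra.
Qed.

End Coordinates.

Section MinimalDistance.
Context {n : nat} {L : pt n -> Prop}.
Hypothesis HL : sublattice_An L.

Lemma sublattice_H0 {p} : L p -> H0 p.
Proof. by case: HL => _ [_ HLp] /HLp []. Qed.

Lemma sublattice_integral {p} : L p -> integral_pt p.
Proof. by case: HL => _ [_ HLp] /HLp []. Qed.

Context {x : pt n}.
Hypothesis Hx : H0 x.

(* Up to a constant, [level t] counts the numbers x_k + z (z integer) below t.
   It jumps at every value d(x, p) of an integral p, so these values cannot
   decrease forever while staying >= 0. *)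
Definition level (t : R) : Z := \big[Z.add/0%Z]_(j < n.+1) Int_part (t - x j).

Lemma level_le t t' : t <= t' -> (level t <= level t')%Z.
Proof.
move=> tt'; apply: (big_ind2 Z.le) => [|*|i _]; [lia | lia | ].
by apply: Int_part_le_compat; lra.
Qed.

Lemma level_lt t t' k z : t' < t -> t - x k = IZR z -> (level t' < level t)%Z.
Proof.
move=> t't tz; rewrite /level (bigD1 k) // [X in (_ < X)%Z](bigD1 k) //=.
apply: Z.add_lt_le_mono; first by rewrite tz Int_part_IZR; apply: Int_part_lt; lra.
apply: (big_ind2 Z.le) => [|*|i _]; [lia | lia | ].
by apply: Int_part_le_compat; lra.
Qed.

Lemma dtri_descent {p} : L p -> ~ (forall p', L p' -> dtri x p <= dtri x p') ->
  exists p', L p' /\ (level 0 <= level (dtri x p') < level (dtri x p))%Z.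
Proof.
move=> Lp /not_all_ex_not [p' not_le].
have [Lp' /Rnot_le_lt lt_p'p] := imply_to_and _ _ not_le.
exists p'; split=> //; split.
  by apply: level_le; apply: dtri_ge0 => //; apply: sublattice_H0.
have [k dk] := dtri_attained x p; have [z pz] := sublattice_integral Lp k.
by apply: (level_lt _ _ k (- z)) => //; rewrite dk pz opp_IZR; ring.
Qed.

Lemma hmin_exists : exists m, is_hmin L x m.
Proof.
suff bounded N p : L p -> (level (dtri x p) - level 0 <= Z.of_nat N)%Z ->
    exists m, is_hmin L x m.
  case: HL => L0 _.
  by apply: (bounded (Z.to_nat (level (dtri x (fun=> R0)) - level 0)) _ L0); lia.
elim: N p => [|N IH] p Lp le_N;
  case: (classic (forall p', L p' -> dtri x p <= dtri x p')) => [p_min|];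
  try by exists (dtri x p); split=> //; exists p.
  by case/(dtri_descent Lp) => p' [_ ?]; lia.
by case/(dtri_descent Lp) => p' [Lp' ?]; apply: (IH p') => //; lia.
Qed.

Lemma hL_spec : is_hmin L x (hL L x).
Proof. by apply: epsilon_spec; apply: hmin_exists. Qed.

End MinimalDistance.

Definition facet_only {n : nat} (L : pt n -> Prop) (v : pt n) (i : 'I_n.+1)
    (p : pt n) : Prop :=
  L p /\ facetF L v i p /\ (forall j : 'I_n.+1, j <> i -> ~ facetF L v j p).

Lemma facet_only_inj {n : nat} {L : pt n -> Prop} {v i j} {p : pt n} :
  facet_only L v i p -> facet_only L v j p -> i = j.
Proof.
move=> [_ [_ not_F]] [_ [Fj _]].
by case: (eqVneq j i) => [//|/eqP ji]; case: (not_F j ji).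
Qed.

Section CriticalPoints.
Context {n : nat} {L : pt n -> Prop}.
Hypothesis HL : sublattice_An L.
Context {v : pt n}.
Hypothesis Hv : H0 v.

Let h := hL L v.

Lemma facet_onlyP i p : facet_only L v i p <->
  L p /\ p i = v i - h /\ (forall j, j <> i -> v j - p j < h).
Proof.
split=> [[Lp [[[Hp in_S] pi] not_Fj]]|[Lp [pi lt_h]]].
  split=> //; split=> // j ji; have := in_S j; rewrite -/h => /Rle_lt_or_eq_dec.
  by case=> [|pj]; [lra | case: (not_Fj j ji); split; [split | rewrite -pj]].
have in_S : simplexS L v p.
  split; first exact: (sublattice_H0 HL Lp).
  move=> j; case: (eqVneq j i) => [->|/eqP ji]; first by rewrite pi /h; lra.
  by have := lt_h j ji; rewrite /h; lra.
split=> //; split=> [|j ji [_ pj]]; first by split.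
by have := lt_h j ji; rewrite pj /h; lra.
Qed.

Lemma simplex_Voronoi p : simplexS L v p -> Voronoi L p v.
Proof.
move=> [_ in_S]; split=> // p' Lp'; have [_ h_le] := hL_spec HL Hv.
by apply: Rle_trans (h_le _ Lp'); apply: dtri_le => k; have := in_S k; lra.
Qed.

Lemma crit_of_facets : (forall i, exists p, facet_only L v i p) -> Crit L v.
Proof.
move=> /fin_all_exists [ps /(_ _)/facet_onlyP ps_facet].
pose gap (ij : 'I_n.+1 * 'I_n.+1) :=
  if ij.2 == ij.1 then 1 else h - (v ij.2 - ps ij.1 ij.2).
have gap_pos ij : 0 < gap ij.
  rewrite /gap; case: eqP => [_|ji]; first lra.
  by have [_ [_ lt_h]] := ps_facet ij.1; have := lt_h _ ji; lra.
have [eps [eps_pos eps_le]] := finite_pos_lower_bound _ gap_pos.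
split=> //; exists eps; split=> // x Hx near_v.
have [i xi_le] := H0_exists_le Hx Hv.
have [Lpi [pii _]] := ps_facet i; have [_ hx_le] := hL_spec HL Hx.
apply: Rle_trans (hx_le _ Lpi) _; apply: dtri_le => k.
case: (eqVneq k i) => [->|ki]; first by rewrite pii -/h; lra.
have := eps_le (i, k); rewrite /gap /= (negbTE ki).
by have := near_v k; have := Rle_abs (x k - v k); rewrite -/h; lra.
Qed.

Lemma facets_of_crit : Crit L v -> forall i, exists p, facet_only L v i p.
Proof.
case=> _ [eps [eps_pos h_max]] i.
have [delta [delta_pos isolated]] := integers_below_isolated (v i - h).
pose E := Rmin eps delta / 2; pose d := E / INR n.+1.
have E_pos : 0 < E by have := Rmin_glb_lt _ _ _ eps_pos delta_pos; rewrite /E; lra.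
have [E_eps E_delta] : E < eps /\ E < delta.
  by have := Rmin_l eps delta; have := Rmin_r eps delta; rewrite /E; lra.
have N_ge1 : 1 <= INR n.+1 by apply: (le_INR 1); apply/leP.
have dE : INR n.+1 * d = E by rewrite /d; field; lra.
have [d_pos d_le] : 0 < d /\ d <= E by split; nra.
pose x j := v j + d + (if j == i then - E else 0).
have Hx : H0 x := H0_perturb i Hv dE.
have near_v j : Rabs (x j - v j) < eps.
  by apply: Rabs_def1; rewrite /x; case: (j == i); lra.
have [[q [Lq dq]] _] := hL_spec HL Hx.
have [_ hv_le] := hL_spec HL Hv.
have xq_le j : x j - q j <= h.
  by have := dtri_ge x q j; have := h_max x Hx near_v; rewrite -/h; lra.
have lt_h j : j <> i -> v j - q j < h.
  by move=> /eqP ji; have := xq_le j; rewrite /x (negbTE ji); lra.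
have qi_le : q i <= v i - h.
  have [k dk] := dtri_attained v q; have := hv_le q Lq; rewrite -/h dk.
  by case: (eqVneq k i) => [->|/eqP ki]; [lra | have := lt_h k ki; lra].
have qi_gt : v i - h - delta < q i by have := xq_le i; rewrite /x eqxx; lra.
have [z qz] := sublattice_integral HL Lq i.
exists q; apply/facet_onlyP; do !split=> //.
by rewrite qz; apply: isolated; rewrite -qz.
Qed.

End CriticalPoints.

Theorem mainTheorem13 (n : nat) (hn : (1 <= n)%N) (L : pt n -> Prop)
  (HL : sublattice_An L) (Hrank : rank_n L) (v : pt n) (Hv : H0 v) :
  (Crit L v <->
     forall i : 'I_n.+1, exists p : pt n,
       L p /\ facetF L v i p /\ (forall j : 'I_n.+1, j <> i -> ~ facetF L v j p))
  /\
  (Crit L v ->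
     exists ps : 'I_n.+1 -> pt n,
       (forall i j, ps i = ps j -> i = j) /\
       (forall i, L (ps i) /\ Voronoi L (ps i) v)).
Proof.
split; first by split; [apply: facets_of_crit | apply: crit_of_facets].
move=> /(facets_of_crit HL Hv) /fin_all_exists [ps ps_facet].
exists ps; split=> [i j ps_ij|i].
  by apply: (facet_only_inj (ps_facet i)); rewrite ps_ij.
have [Lp [[in_S _] _]] := ps_facet i.
by split=> //; apply: simplex_Voronoi.
Qed.
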